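(* Fix weights $w_1,w_2\ge 0$ with $w_1+w_2>0$, a cost type (uniform or proportional) and a game type (simultaneous, symmetric simultaneous, or sequential). Then the optimal value of the linear program described below (with the constraints corresponding to these choices) equals the price of anarchy of the class of two-player weighted congestion games with affine costs, player weights $w_1,w_2$, the given cost type and the given game type. The LP: Let the label set be $\mathcal{L}=\{O_1,E_1,O_2,E_2\}$ for simultaneous games and $\mathcal{L}=\{O_1,E_1,O_2,E_2,F_2\}$ for sequential games. Label sets of the players: simultaneous: $\mathcal{L}_1=\{O_1,E_1\}$, $\mathcal{L}_2=\{O_2,E_2\}$; symmetric simultaneous: $\mathcal{L}_1=\mathcal{L}_2=\{O_1,E_1,O_2,E_2\}$; sequential: $\mathcal{L}_1=\{O_1,E_1\}$, $\mathcal{L}_2=\{O_2,E_2,F_2\}$. Let $R=2^{\mathcal{L}}$. Variables: $\alpha_r,\beta_r$ for $r\in R$ and $C_i(a_1,a_2)$ for $i\in\{1,2\}$, $a_1\in\mathcal{L}_1$, $a_2\in\mathcal{L}_2$. Maximize $C_1(E_1,E_2)+C_2(E_1,E_2)$ subject to: $C_1(O_1,O_2)+C_2(O_1,O_2)=1$; $C_1(a_1,a_2)+C_2(a_1,a_2)\ge 1$ for all $a_1\in\mathcal{L}_1,a_2\in\mathcal{L}_2$; $\alpha_r,\beta_r\ge0$ for all $r\in R$; for all $a_1,a_2$ and $i=1,2$: $C_i(a_1,a_2)=\sum_{r\in R:\, a_i\in r}\bigl(\alpha_r+\beta_r\sum_{j\in\{1,2\}:\, a_j\in r} w_j\bigr)$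 in the uniform case, respectively $C_i(a_1,a_2)=w_i\sum_{r\in R:\, a_i\in r}\bigl(\alpha_r+\beta_r\sum_{j\in\{1,2\}:\, a_j\in r} w_j\bigr)$ in the proportional case; in the (symmetric) simultaneous case additionally $C_1(E_1,E_2)\le C_1(a_1,E_2)$ for all $a_1\in\mathcal{L}_1$ and $C_2(E_1,E_2)\le C_2(E_1,a_2)$ for all $a_2\in\mathcal{L}_2$; in the sequential case additionally $C_2(E_1,E_2)\le C_2(E_1,a_2)$ and $C_2(O_1,F_2)\le C_2(O_1,a_2)$ for all $a_2\in\mathcal{L}_2$, and $C_1(E_1,E_2)\le C_1(O_1,F_2)$.
   Context: A weighted two-player congestion game with affine costs consists of a finite set $R'$ of resources, coefficients $\alpha_r,\beta_r \geq 0$ for each $r\in R'$, two players $i=1,2$ with weights $w_i\ge 0$, and for each player $i$ a nonempty finite set $\mathcal{A}_i \subseteq 2^{R'}$ of actions; it is symmetric if $\mathcal{A}_1=\mathcal{A}_2$. For an action profile $A=(A_1,A_2)$ the load of $r$ is $x_r(A)=\sum_{j:\, r\in A_j} w_j$. With uniform costs player $i$ pays $C_i(A)=\sum_{r\in A_i}(\alpha_r+\beta_r x_r(A))$; with proportional costs $C_i(A)=w_i\sum_{r\in A_i}(\alpha_r+\beta_r x_r(A))$. Social cost $C(A)=C_1(A)+C_2(A)$. In simultaneous games the equilibria are pure Nash equilibria (no player can lower her cost by unilaterally deviating). In sequential games player 1 chooses first and player 2 responds after observing $A_1$; a subgame-perfect equilibrium consists of a function $A_1\mapsto A_2^*(A_1)$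 with $C_2(A_1,A_2^*(A_1))\le C_2(A_1,A_2)$ for all $A_1,A_2$ and an action $A_1^*$ with $C_1(A_1^*,A_2^*(A_1^* ))\le C_1(A_1,A_2^*(A_1))$ for all $A_1$, with outcome $(A_1^*,A_2^*(A_1^* ))$. The price of anarchy of an instance is the maximum over equilibrium outcomes $A$ of $C(A)/\min_{A'}C(A')$, and of a class the supremum over its instances (with positive optimal social cost). *)

From HB Require Import structures.
From mathcomp Require Import all_boot all_order all_algebra.
From mathcomp Require Import classical_sets reals constructive_ereal ereal.

Set Implicit Arguments.
Unset Strict Implicit.
Unset Printing Implicit Defensive.
Import Order.TTheory GRing.Theory Num.Theory.
Local Open Scope classical_set_scope.
Local Open Scope ring_scope.

Inductive cost_type := Uniform | Proportional.
Inductive game_type := Simultaneous | SymSimultaneous | Sequential.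

Definition scale_cost (R : realType) (ct : cost_type) (wi s : R) : R :=
  match ct with Uniform => s | Proportional => wi * s end.

(* Resources: 'I_n (any finite resource set is in bijection with one). *)
Section Games.
Variables (R : realType) (ct : cost_type) (w1 w2 : R) (n : nat)
          (alpha beta : 'I_n -> R).

Definition load (A1 A2 : {set 'I_n}) (r : 'I_n) : R :=
  (if r \in A1 then w1 else 0) + (if r \in A2 then w2 else 0).

Definition res_sum (Ai A1 A2 : {set 'I_n}) : R :=
  \sum_(r in Ai) (alpha r + beta r * load A1 A2 r).

Definition cost1 (A1 A2 : {set 'I_n}) : R := scale_cost ct w1 (res_sum A1 A1 A2).
Definition cost2 (A1 A2 : {set 'I_n}) : R := scale_cost ct w2 (res_sum A2 A1 A2).
Definition social_cost (A1 A2 : {set 'I_n}) : R := cost1 A1 A2 + cost2 A1 A2.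

Definition is_PNE (S1 S2 : {set {set 'I_n}}) (A1 A2 : {set 'I_n}) : Prop :=
  [/\ A1 \in S1, A2 \in S2,
      (forall B1, B1 \in S1 -> cost1 A1 A2 <= cost1 B1 A2) &
      (forall B2, B2 \in S2 -> cost2 A1 A2 <= cost2 A1 B2)].

Definition is_SPE_outcome (S1 S2 : {set {set 'I_n}}) (A1 A2 : {set 'I_n}) : Prop :=
  exists f : {set 'I_n} -> {set 'I_n},
    [/\ (forall B1, B1 \in S1 -> f B1 \in S2),
        (forall B1 B2, B1 \in S1 -> B2 \in S2 -> cost2 B1 (f B1) <= cost2 B1 B2),
        A1 \in S1,
        (forall B1, B1 \in S1 -> cost1 A1 (f A1) <= cost1 B1 (f B1)) &
        A2 = f A1].

Definition is_eq_outcome (gt : game_type) S1 S2 A1 A2 : Prop :=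
  match gt with
  | Sequential => is_SPE_outcome S1 S2 A1 A2
  | _ => is_PNE S1 S2 A1 A2
  end.

Definition valid_instance (gt : game_type) (S1 S2 : {set {set 'I_n}}) : Prop :=
  [/\ (forall r, 0 <= alpha r /\ 0 <= beta r),
      (exists B1, B1 \in S1), (exists B2, B2 \in S2) &
      (match gt with SymSimultaneous => S1 = S2 | _ => True end)].

End Games.

Definition PoA_class (R : realType) (w1 w2 : R) (ct : cost_type)
    (gt : game_type) : \bar R :=
  ereal_sup [set x : \bar R | exists (n : nat) (alpha beta : 'I_n -> R)
      (S1 S2 : {set {set 'I_n}}) (A1 A2 O1 O2 : {set 'I_n}),
      [/\ valid_instance alpha beta gt S1 S2,
          is_eq_outcome ct w1 w2 alpha beta gt S1 S2 A1 A2,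
          O1 \in S1 /\ O2 \in S2,
          ((forall B1 B2, B1 \in S1 -> B2 \in S2 ->
             social_cost ct w1 w2 alpha beta O1 O2
               <= social_cost ct w1 w2 alpha beta B1 B2) /\
           0 < social_cost ct w1 w2 alpha beta O1 O2) &
          x = (social_cost ct w1 w2 alpha beta A1 A2
                / social_cost ct w1 w2 alpha beta O1 O2)%:E]].

Definition label := 'I_5.
Definition lO1 : label := @Ordinal 5 0 isT.
Definition lE1 : label := @Ordinal 5 1 isT.
Definition lO2 : label := @Ordinal 5 2 isT.
Definition lE2 : label := @Ordinal 5 3 isT.
Definition lF2 : label := @Ordinal 5 4 isT.

Definition labels (gt : game_type) : {set label} :=
  match gt with
  | Sequential => [set lO1; lE1; lO2; lE2; lF2]
  | _ => [set lO1; lE1; lO2; lE2]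
  end.

Definition labels1 (gt : game_type) : {set label} :=
  match gt with
  | SymSimultaneous => [set lO1; lE1; lO2; lE2]
  | _ => [set lO1; lE1]
  end.

Definition labels2 (gt : game_type) : {set label} :=
  match gt with
  | Simultaneous => [set lO2; lE2]
  | SymSimultaneous => [set lO1; lE1; lO2; lE2]
  | Sequential => [set lO2; lE2; lF2]
  end.

Definition lp_resources (gt : game_type) : {set {set label}} :=
  powerset (labels gt).

Section LP.
Variables (R : realType) (w1 w2 : R) (ct : cost_type) (gt : game_type).

Definition lp_sum (al be : {set label} -> R) (a a1 a2 : label) : R :=
  \sum_(r in lp_resources gt | a \in r)
     (al r + be r * ((if a1 \in r then w1 else 0) + (if a2 \in r then w2 else 0))).

Definition lp_eq_constraints (c1 c2 : label -> label -> R) : Prop :=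
  match gt with
  | Sequential =>
      [/\ (forall a2, a2 \in labels2 gt -> c2 lE1 lE2 <= c2 lE1 a2),
          (forall a2, a2 \in labels2 gt -> c2 lO1 lF2 <= c2 lO1 a2) &
          c1 lE1 lE2 <= c1 lO1 lF2]
  | _ =>
      (forall a1, a1 \in labels1 gt -> c1 lE1 lE2 <= c1 a1 lE2) /\
      (forall a2, a2 \in labels2 gt -> c2 lE1 lE2 <= c2 lE1 a2)
  end.

Definition lp_feasible (al be : {set label} -> R) (c1 c2 : label -> label -> R)
    : Prop :=
  [/\ c1 lO1 lO2 + c2 lO1 lO2 = 1,
      (forall a1 a2, a1 \in labels1 gt -> a2 \in labels2 gt ->
         1 <= c1 a1 a2 + c2 a1 a2),
      (forall r, r \in lp_resources gt -> 0 <= al r /\ 0 <= be r),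
      (forall a1 a2, a1 \in labels1 gt -> a2 \in labels2 gt ->
         c1 a1 a2 = scale_cost ct w1 (lp_sum al be a1 a1 a2) /\
         c2 a1 a2 = scale_cost ct w2 (lp_sum al be a2 a1 a2)) &
      lp_eq_constraints c1 c2].

Definition lp_value : \bar R :=
  ereal_sup [set x : \bar R | exists (al be : {set label} -> R)
      (c1 c2 : label -> label -> R),
      lp_feasible al be c1 c2 /\ x = (c1 lE1 lE2 + c2 lE1 lE2)%:E].

End LP.

From mathcomp Require Import all_boot all_order all_algebra.
From mathcomp Require Import classical_sets reals constructive_ereal ereal.
Import Order.TTheory GRing.Theory Num.Theory.
Local Open Scope ring_scope.
Set Implicit Arguments. Unset Strict Implicit. Unset Printing Implicit Defensive.

(* An equilibrium outcome E, an optimum O and, in the sequential game, player 2's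
   reply F2 to O1 form a profile of actions indexed by the labels.  Grouping the
   resources of an instance by the set of labels whose action uses them, and
   summing their coefficients divided by C(O), gives a feasible LP point of value
   C(E) / C(O), since grouping does not change the cost of any labelled profile.
   Conversely an LP point is an instance: its resources are the subsets of labels
   and the action of a label is the set of resources containing it.  So the two
   suprema range over the same values. *)

Ltac case_label := case=> [[|[|[|[|[|?]]]]] ?]; rewrite !inE //.

Lemma labels1_subset gt : {subset labels1 gt <= labels gt}.
Proof. by case: gt; case_label. Qed.

Lemma labels2_subset gt : {subset labels2 gt <= labels gt}.
Proof. by case: gt; case_label. Qed.

Lemma mem_labels_OE gt :
  [/\ lO1 \in labels1 gt, lE1 \in labels1 gt, lO2 \in labels2 gt & lE2 \in labels2 gt].
Proof. by case: gt; rewrite !inE. Qed.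

Lemma eq_lp_eq_constraints (R : realType) gt (c1 c2 d1 d2 : label -> label -> R) :
  {in labels1 gt & labels2 gt, c1 =2 d1} -> {in labels1 gt & labels2 gt, c2 =2 d2} ->
  lp_eq_constraints gt c1 c2 -> lp_eq_constraints gt d1 d2.
Proof.
have [LO1 LE1 LO2 LE2] := mem_labels_OE gt.
have LF2 : lF2 \in labels2 Sequential by rewrite !inE.
case: gt LO1 LE1 LO2 LE2 => LO1 LE1 LO2 LE2 e1 e2 /=.
- by case=> br1 br2; split=> a La; rewrite -?e1 -?e2 // ?br1 ?br2.
- by case=> br1 br2; split=> a La; rewrite -?e1 -?e2 // ?br1 ?br2.
- by case=> brE brO E1_lead; split=> [a La | a La |]; rewrite -?e1 -?e2 // ?brE ?brO.
Qed.

Lemma imset_labels_sym gt (T : finType) (f : label -> T) :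
  match gt with SymSimultaneous => f @: labels1 gt = f @: labels2 gt | _ => True end.
Proof. by case: gt. Qed.

Lemma scale_cost_divr (R : realType) ct (w x k : R) :
  scale_cost ct w (x / k) = scale_cost ct w x / k.
Proof. by case: ct => //=; rewrite mulrA. Qed.

Lemma lp_sum_divr (R : realType) (w1 w2 : R) gt (al be : {set label} -> R) k a a1 a2 :
  lp_sum w1 w2 gt (fun S => al S / k) (fun S => be S / k) a a1 a2 =
  lp_sum w1 w2 gt al be a a1 a2 / k.
Proof. by rewrite /lp_sum mulr_suml; apply: eq_bigr => S _; rewrite mulrDl mulrAC. Qed.

Lemma lp_eq_constraints_mulr (R : realType) gt (c1 c2 : label -> label -> R) k :
  0 <= k -> lp_eq_constraints gt c1 c2 ->
  lp_eq_constraints gt (fun a1 a2 => c1 a1 a2 * k) (fun a1 a2 => c2 a1 a2 * k).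
Proof.
move=> k_ge0; case: gt => /=.
- by case=> e1 e2; split=> a ha; rewrite ler_wpM2r // ?e1 ?e2.
- by case=> e1 e2; split=> a ha; rewrite ler_wpM2r // ?e1 ?e2.
- by case=> e1 e2 e3; split=> [a ha|a ha|]; rewrite ler_wpM2r // ?e1 ?e2.
Qed.

Section Aggregation.
Variables (R : realType) (w1 w2 : R) (gt : game_type) (n : nat).
Variable act : label -> {set 'I_n}.

Definition resource_labels (i : 'I_n) : {set label} := [set a in labels gt | i \in act a].

Definition aggregate (f : 'I_n -> R) (S : {set label}) : R :=
  \sum_(i | resource_labels i == S) f i.

Lemma aggregate_ge0 f S : (forall i, 0 <= f i) -> 0 <= aggregate f S.
Proof. by move=> f_ge0; apply: sumr_ge0. Qed.

Lemma lp_sum_aggregate (alpha beta : 'I_n -> R) a a1 a2 :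
  a \in labels gt -> a1 \in labels gt -> a2 \in labels gt ->
  lp_sum w1 w2 gt (aggregate alpha) (aggregate beta) a a1 a2 =
  res_sum w1 w2 alpha beta (act a) (act a1) (act a2).
Proof.
move=> La La1 La2; rewrite /res_sum /lp_sum.
rewrite [RHS](partition_big resource_labels
  (fun S => (S \in lp_resources gt) && (a \in S))) /=; last first.
  move=> i ai; rewrite /lp_resources powersetE [a \in _]inE La ai; apply/andP; split=> //.
  by apply/fintype.subsetP => b; rewrite inE => /andP[].
apply: eq_bigr => S /andP[_ aS].
have labelsE i : resource_labels i == S -> (i \in act a) = true.
  by move=> /eqP iS; move: aS; rewrite -iS inE => /andP[].
rewrite (eq_bigl (fun i => resource_labels i == S)); last first.
  by move=> i; case iS: (resource_labels i == S); rewrite ?andbF ?andbT ?labelsE.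
rewrite /aggregate mulr_suml -big_split; apply: eq_bigr => i /eqP <-.
by rewrite /load !inE La1 La2.
Qed.

End Aggregation.

Section Realization.
Variables (R : realType) (w1 w2 : R) (gt : game_type).

Definition realize_coef (f : {set label} -> R) (i : 'I_#|{set label}|) : R :=
  let S : {set label} := enum_val i in if S \in lp_resources gt then f S else 0.

Definition label_action (a : label) : {set 'I_#|{set label}|} :=
  [set i | a \in (enum_val i : {set label})].

Lemma res_sum_realize (al be : {set label} -> R) a a1 a2 :
  res_sum w1 w2 (realize_coef al) (realize_coef be)
    (label_action a) (label_action a1) (label_action a2) =
  lp_sum w1 w2 gt al be a a1 a2.
Proof.
rewrite /res_sum /lp_sum big_mkcondl /=.
rewrite (reindex (@enum_rank _)); last exact/onW_bij/enum_rank_bij.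
apply: eq_big => [S|S _]; first by rewrite inE enum_rankK.
rewrite /realize_coef /load !inE enum_rankK.
by case: ifP => _; rewrite ?mul0r ?addr0.
Qed.

Lemma label_action_inj : injective label_action.
Proof.
move=> a b eq_ab; have : enum_rank [set a] \in label_action a.
  by rewrite inE enum_rankK set11.
by rewrite eq_ab inE enum_rankK inE => /eqP.
Qed.

End Realization.

Section Profiles.
Variables (R : realType) (ct : cost_type) (w1 w2 : R) (gt : game_type) (n : nat).
Variables (alpha beta : 'I_n -> R).

Definition profile_cost1 (act : label -> {set 'I_n}) (a1 a2 : label) : R :=
  cost1 ct w1 w2 alpha beta (act a1) (act a2).

Definition profile_cost2 (act : label -> {set 'I_n}) (a1 a2 : label) : R :=
  cost2 ct w1 w2 alpha beta (act a1) (act a2).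

Definition label_profile (O1 A1 O2 A2 F2 : {set 'I_n}) (a : label) : {set 'I_n} :=
  if a == lO1 then O1 else if a == lE1 then A1 else if a == lO2 then O2
  else if a == lE2 then A2 else F2.

Lemma profile_of_eq_outcome (S1 S2 : {set {set 'I_n}}) (O1 O2 A1 A2 : {set 'I_n}) :
  O1 \in S1 -> O2 \in S2 ->
  (match gt with SymSimultaneous => S1 = S2 | _ => True end) ->
  is_eq_outcome ct w1 w2 alpha beta gt S1 S2 A1 A2 ->
  exists act : label -> {set 'I_n},
    [/\ [/\ act lO1 = O1, act lE1 = A1, act lO2 = O2 & act lE2 = A2],
        {in labels1 gt, forall a, act a \in S1},
        {in labels2 gt, forall a, act a \in S2} &
        lp_eq_constraints gt (profile_cost1 act) (profile_cost2 act)].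
Proof.
move=> O1S1 O2S2; case: gt => /= [_ | eS | _]; rewrite ?eS in O1S1 *.
- case=> A1S1 A2S2 br1 br2; exists (label_profile O1 A1 O2 A2 O2).
  have in1 : {in labels1 Simultaneous, forall a, label_profile O1 A1 O2 A2 O2 a \in S1}.
    by case_label.
  have in2 : {in labels2 Simultaneous, forall a, label_profile O1 A1 O2 A2 O2 a \in S2}.
    by case_label.
  split; [by split | exact: in1 | exact: in2 |].
  by split=> a La; [apply/br1/in1 | apply/br2/in2].
- case=> A1S1 A2S2 br1 br2; exists (label_profile O1 A1 O2 A2 O2).
  have in1 : {in labels1 SymSimultaneous, forall a, label_profile O1 A1 O2 A2 O2 a \in S2}.
    by case_label.
  split; [by split | exact: in1 | exact: in1 |].
  by split=> a La; [apply/br1/in1 | apply/br2/in1].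
- case=> f [fS2 f_br A1S1 A1_br ->]; exists (label_profile O1 A1 O2 (f A1) (f O1)).
  have in2 : {in labels2 Sequential, forall a, label_profile O1 A1 O2 (f A1) (f O1) a \in S2}.
    by case_label => _; apply: fS2.
  split; [by split | by case_label | exact: in2 |].
  by split=> [a La | a La |]; [apply/f_br/in2 | apply/f_br/in2 | apply: A1_br].
Qed.

Lemma eq_outcome_of_profile (act : label -> {set 'I_n}) :
  act lE1 != act lO1 ->
  lp_eq_constraints gt (profile_cost1 act) (profile_cost2 act) ->
  is_eq_outcome ct w1 w2 alpha beta gt
    [set act a | a in labels1 gt] [set act a | a in labels2 gt] (act lE1) (act lE2).
Proof.
have [LO1 LE1 LO2 LE2] := mem_labels_OE gt.
move=> E1_neq_O1; case: gt LO1 LE1 LO2 LE2 => LO1 LE1 LO2 LE2 /=.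
- case=> br1 br2; split; rewrite ?imset_f //.
  + by move=> _ /imsetP[b Lb ->]; apply: br1.
  + by move=> _ /imsetP[b Lb ->]; apply: br2.
- case=> br1 br2; split; rewrite ?imset_f //.
  + by move=> _ /imsetP[b Lb ->]; apply: br1.
  + by move=> _ /imsetP[b Lb ->]; apply: br2.
- case=> brE brO E1_lead.
  have LF2 : lF2 \in labels2 Sequential by rewrite !inE.
  exists (fun B => if B == act lO1 then act lF2 else act lE2).
  split; rewrite ?(negbTE E1_neq_O1) ?imset_f //.
  + by move=> B _; case: ifP => _; apply: imset_f.
  + move=> _ _ /imsetP[b1 + ->] /imsetP[b2 Lb2 ->].
    rewrite !inE => /orP[] /eqP ->; rewrite ?eqxx ?(negbTE E1_neq_O1).
    * exact: brO.
    * exact: brE.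
  + move=> _ /imsetP[b1 + ->]; rewrite !inE => /orP[] /eqP ->.
    * by rewrite eqxx.
    * by rewrite (negbTE E1_neq_O1).
Qed.

Lemma lp_point_of_profile (S1 S2 : {set {set 'I_n}}) (act : label -> {set 'I_n}) :
  (forall r, 0 <= alpha r /\ 0 <= beta r) ->
  {in labels1 gt, forall a, act a \in S1} -> {in labels2 gt, forall a, act a \in S2} ->
  (forall B1 B2, B1 \in S1 -> B2 \in S2 ->
     social_cost ct w1 w2 alpha beta (act lO1) (act lO2)
       <= social_cost ct w1 w2 alpha beta B1 B2) ->
  0 < social_cost ct w1 w2 alpha beta (act lO1) (act lO2) ->
  lp_eq_constraints gt (profile_cost1 act) (profile_cost2 act) ->
  exists al be c1 c2, lp_feasible w1 w2 ct gt al be c1 c2 /\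
    c1 lE1 lE2 + c2 lE1 lE2 =
    social_cost ct w1 w2 alpha beta (act lE1) (act lE2)
      / social_cost ct w1 w2 alpha beta (act lO1) (act lO2).
Proof.
set K := social_cost _ _ _ _ _ (act lO1) (act lO2).
move=> coef_ge0 actS1 actS2 opt K_gt0 eqc.
exists (fun S => aggregate gt act alpha S / K), (fun S => aggregate gt act beta S / K),
  (fun a1 a2 => profile_cost1 act a1 a2 / K), (fun a1 a2 => profile_cost2 act a1 a2 / K).
split; last by rewrite -mulrDl.
split.
- by rewrite -mulrDl divff ?gt_eqF.
- move=> a1 a2 La1 La2; rewrite -mulrDl ler_pdivlMr // mul1r.
  exact: opt (actS1 _ La1) (actS2 _ La2).
- move=> S _; split; apply: divr_ge0; rewrite ?(ltW K_gt0) //;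
    by apply: aggregate_ge0 => i; case: (coef_ge0 i).
- move=> a1 a2 /labels1_subset La1 /labels2_subset La2.
  by rewrite !lp_sum_divr !scale_cost_divr !lp_sum_aggregate.
- by apply: lp_eq_constraints_mulr; rewrite // invr_ge0 ltW.
Qed.

End Profiles.

Lemma lp_point_realizable (R : realType) (w1 w2 : R) ct gt al be c1 c2 :
  lp_feasible w1 w2 ct gt al be c1 c2 ->
  exists (n : nat) (alpha beta : 'I_n -> R)
      (S1 S2 : {set {set 'I_n}}) (A1 A2 O1 O2 : {set 'I_n}),
      [/\ valid_instance alpha beta gt S1 S2,
          is_eq_outcome ct w1 w2 alpha beta gt S1 S2 A1 A2,
          O1 \in S1 /\ O2 \in S2,
          ((forall B1 B2, B1 \in S1 -> B2 \in S2 ->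
             social_cost ct w1 w2 alpha beta O1 O2
               <= social_cost ct w1 w2 alpha beta B1 B2) /\
           0 < social_cost ct w1 w2 alpha beta O1 O2) &
          (c1 lE1 lE2 + c2 lE1 lE2)%:E = (social_cost ct w1 w2 alpha beta A1 A2
                / social_cost ct w1 w2 alpha beta O1 O2)%:E].
Proof.
case=> CO C_ge1 coef_ge0 C_def eqc; have [LO1 LE1 LO2 LE2] := mem_labels_OE gt.
pose alpha := realize_coef gt al; pose beta := realize_coef gt be.
have costs a1 a2 : a1 \in labels1 gt -> a2 \in labels2 gt ->
    profile_cost1 ct w1 w2 alpha beta label_action a1 a2 = c1 a1 a2 /\
    profile_cost2 ct w1 w2 alpha beta label_action a1 a2 = c2 a1 a2.
  by move=> La1 La2; rewrite /profile_cost1 /profile_cost2 /cost1 /cost2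
    !res_sum_realize; case: (C_def _ _ La1 La2) => -> ->.
have social a1 a2 : a1 \in labels1 gt -> a2 \in labels2 gt ->
    social_cost ct w1 w2 alpha beta (label_action a1) (label_action a2) = c1 a1 a2 + c2 a1 a2.
  by move=> La1 La2; case: (costs _ _ La1 La2) => <- <-.
exists #|{set label}|, alpha, beta,
  [set label_action a | a in labels1 gt], [set label_action a | a in labels2 gt],
  (label_action lE1), (label_action lE2), (label_action lO1), (label_action lO2).
split; rewrite ?imset_f ?social ?CO ?divr1 //.
- split; first by move=> S; rewrite /alpha /beta /realize_coef; case: ifP => // /coef_ge0.
  + by exists (label_action lO1); apply: imset_f.
  + by exists (label_action lO2); apply: imset_f.
  + exact: imset_labels_sym.
- apply: eq_outcome_of_profile; first by apply/eqP => /label_action_inj.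
  by apply: eq_lp_eq_constraints eqc => a1 a2 La1 La2; case: (costs _ _ La1 La2).
- split=> [_ _ /imsetP[b1 Lb1 ->] /imsetP[b2 Lb2 ->]|//].
  by rewrite social ?C_ge1.
Qed.

Theorem theorem8 (R : realType) (w1 w2 : R) (ct : cost_type) (gt : game_type) :
  0 <= w1 -> 0 <= w2 -> 0 < w1 + w2 ->
  lp_value w1 w2 ct gt = PoA_class w1 w2 ct gt.
Proof.
(* The correspondence between LP points and instances holds for arbitrary weights. *)
move=> _ _ _; rewrite /lp_value /PoA_class; congr ereal_sup; apply/seteqP; split=> x.
  by move=> [al [be [c1 [c2 [feasible ->]]]]]; exact: lp_point_realizable feasible.
move=> [n [alpha [beta [S1 [S2 [A1 [A2 [O1 [O2 [valid eqo [O1S1 O2S2] [opt K_gt0] ->]]]]]]]]]].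
case: valid => coef_ge0 _ _ sym.
have [act [[eO1 eA1 eO2 eA2] actS1 actS2 eqc]] := profile_of_eq_outcome O1S1 O2S2 sym eqo.
subst O1 A1 O2 A2.
have [al [be [c1 [c2 [feasible value]]]]] :=
  lp_point_of_profile coef_ge0 actS1 actS2 opt K_gt0 eqc.
by exists al, be, c1, c2; rewrite value.
Qed.
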